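(* Let $S=(N,M_0)$ be a live H1S-WMG$_\le$ system with incidence matrix $I$. For any T-vector $Y\in\mathbb{N}^T$ and marking $M$ with $M_0+I\cdot Y=M$, there exist a marking $M'$ and a firing sequence $\sigma$ with $M_0[\sigma\rangle M'$ such that $\mathbf{P}(\sigma)\ge Y$ and $M[\sigma\ominus Y\rangle M'$. Consequently, the potential reachability graph of $S$ is initially directed (for every $M_1\in PR(S)$ there is a marking reachable both from $M_0$ and from $M_1$), $(N,M)$ is live for every such $M$, and thus $S$ is strongly live (every $M\in PR(S)$ yields a live system $(N,M)$).
   Context: A Petri net is $N=(P,T,W)$ with finite disjoint sets $P$, $T$ and weights $W:(P\times T)\cup(T\times P)\to\mathbb{N}$; incidence matrix $I(p,t)=W(t,p)-W(p,t)$; ${}^\bullet n=\{n':W(n',n)>0\}$, $n^\bullet=\{n':W(n,n')>0\}$. Transition $t$ is enabled at $M$ if $M(p)\ge W(p,t)$ for all $p$; firing yields $M+I[\cdot,t]$; $M[\sigma\rangle M'$ means the sequence $\sigma$ is feasible from $M$ and leads to $M'$. $\mathbf{P}(\sigma)$ is the Parikh vector of $\sigma$. $PR(S)=\{M\in\mathbb{N}^P:\exists Y\in\mathbb{N}^T, M=M_0+I\cdot Y\}$. A system is live if for every transition $t$ and every reachable marking $M'$ some marking reachable from $M'$ enables $t$. A place is shared if it has at least two output transitions. The net is homogeneous if for each place $p$ all weights $W(p,t)$, $t\in p^\bullet$, are equal. An H1S net is a homogeneous net with at most one shared place. It is H1S-WMG$_\le$ if, moreover, deleting the shared place (if any) together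 with its adjacent arcs (keeping all transitions) yields a WMG$_\le$, i.e. a net in which every place has at most one input and at most one output transition. Residue: for a sequence $\sigma$ and $Y\in\mathbb{N}^T$, $\sigma\ominus Y$ is obtained from $\sigma$ by removing, for each transition $t$, the $\min\{\mathbf{P}(\sigma)(t),Y(t)\}$ leftmost occurrences of $t$. *)

From mathcomp Require Import all_boot all_order all_algebra.
Set Implicit Arguments. Unset Strict Implicit. Unset Printing Implicit Defensive.
Import GRing.Theory Num.Theory.

(* A Petri net with finite disjoint sets of places P and transitions T
   (disjointness is automatic: they are distinct types). *)
Record net (P T : finType) := Net {
  wpt : P -> T -> nat;
  wtp : T -> P -> nat
}.

Section PetriDefs.
Variables (P T : finType) (N : net P T).

Definition marking := {ffun P -> nat}.

Definition incidence (p : P) (t : T) : int :=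
  (Posz (wtp N t p) - Posz (wpt N p t))%R.

Definition preset_p (p : P) : {set T} := [set t | 0 < wtp N t p].
Definition postset_p (p : P) : {set T} := [set t | 0 < wpt N p t].

Definition enabled (M : marking) (t : T) : bool :=
  [forall p, wpt N p t <= M p].

Definition fire (M : marking) (t : T) : marking :=
  [ffun p => M p - wpt N p t + wtp N t p].

Fixpoint fires (M : marking) (s : seq T) (M' : marking) : Prop :=
  match s with
  | [::] => M = M'
  | t :: s' => enabled M t /\ fires (fire M t) s' M'
  end.

Definition reachable (M M' : marking) : Prop := exists s, fires M s M'.

Definition parikh (s : seq T) (t : T) : nat := count_mem t s.

(* residue s (-) Y: remove, for each t, the min(P(s)(t), Y(t)) leftmost
   occurrences of t *)
Fixpoint residue (s : seq T) (Y : T -> nat) : seq T :=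
  match s with
  | [::] => [::]
  | t :: s' =>
      if 0 < Y t then residue s' (fun u => if u == t then (Y u).-1 else Y u)
      else t :: residue s' Y
  end.

Definition marking_eq (M0 : marking) (Y : T -> nat) (M : marking) : Prop :=
  forall p, Posz (M p) = (Posz (M0 p) + \sum_(t : T) incidence p t * Posz (Y t))%R.

Definition PR (M0 : marking) (M : marking) : Prop :=
  exists Y : T -> nat, marking_eq M0 Y M.

Definition live (M0 : marking) : Prop :=
  forall (t : T) (M' : marking), reachable M0 M' ->
    exists M'', reachable M' M'' /\ enabled M'' t.

Definition shared (p : P) : bool := 2 <= #|postset_p p|.

Definition homogeneous : Prop :=
  forall p t t', t \in postset_p p -> t' \in postset_p p ->
    wpt N p t = wpt N p t'.

Definition H1S : Prop :=
  homogeneous /\ (forall p q, shared p -> shared q -> p = q).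

(* removing the (unique, if any) shared place leaves a WMG_<= : every
   remaining place has at most one input and at most one output transition *)
Definition H1S_WMGle : Prop :=
  H1S /\ (forall p, ~~ shared p -> #|preset_p p| <= 1 /\ #|postset_p p| <= 1).

Definition initially_directed (M0 : marking) : Prop :=
  forall M1, PR M0 M1 -> exists M, reachable M0 M /\ reachable M1 M.

Definition strongly_live (M0 : marking) : Prop :=
  forall M, PR M0 M -> live M.

End PetriDefs.

(* Write M0 + I.D = B, where the debt D counts the transitions that B has
   fired "on credit".  While some transition has positive debt, fire from
   M0 towards a debt transition (it exists by liveness) along debt-free
   transitions, copying every step at B: the marking equation is preserved,
   and in an H1S-WMG_<= net a debt-free transition enabled at M0 is also
   enabled at B, as long as no debt transition is enabled at M0.  Once a debt
   transition d is enabled, fire it at M0 only, which pays one unit of debt.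
   The key obstruction argument: if no debt transition could ever fire, each
   one would have an unshared input place all of whose neighbours carry debt,
   and firing debt-free transitions never touches those places, against
   liveness. *)
From mathcomp Require Import all_boot all_order all_algebra.
From mathcomp Require Import zify.
Set Implicit Arguments. Unset Strict Implicit. Unset Printing Implicit Defensive.
Import GRing.Theory Num.Theory.

Definition decr (T : eqType) (D : T -> nat) (d : T) : T -> nat :=
  fun u => if u == d then (D u).-1 else D u.

Lemma decrK (T : eqType) (D : T -> nat) d u :
  0 < D d -> decr D d u + (u == d) = D u.
Proof.
by rewrite /decr; case: eqP => [-> /prednK|_ _]; rewrite ?addn0 ?addn1.
Qed.

Lemma sum_decr (T : finType) (D : T -> nat) d :
  0 < D d -> \sum_t D t = (\sum_t decr D d t).+1.
Proof.
move=> Dd; rewrite -(eq_bigr _ (fun u _ => decrK u Dd)) big_split /= -addn1.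
by congr (_ + _); rewrite (bigD1 d) //= eqxx big1 ?addn0 // => u /negbTE->.
Qed.

Lemma residue_debt_free (T : finType) (r s : seq T) (D : T -> nat) :
  all (fun t => D t == 0) r -> residue (r ++ s) D = r ++ residue s D.
Proof. by elim: r => //= t r IH /andP[/eqP-> /IH->]. Qed.

Section Firing.
Variables (P T : finType) (N : net P T).
Implicit Types (A B C X : marking P) (s : seq T) (D : T -> nat).

Lemma fires_cat A B C s1 s2 :
  fires N A s1 B -> fires N B s2 C -> fires N A (s1 ++ s2) C.
Proof.
elim: s1 A => [|t s IH] A /=; first by move=> ->.
by case=> En Hs Hs2; split=> //; apply: IH Hs Hs2.
Qed.

Lemma live_fires A X s : live N A -> fires N A s X -> live N X.
Proof.
move=> HL Hs t M [s' Hs']; apply: HL.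
by exists (s ++ s'); apply: fires_cat Hs Hs'.
Qed.

Lemma fire_incidence A t p :
  enabled N A t -> Posz (fire N A t p) = (Posz (A p) + incidence N p t)%R.
Proof. by move=> /forallP/(_ p); rewrite /fire ffunE /incidence; lia. Qed.

Lemma unshared_post_uniq r x y :
  ~~ shared N r -> 0 < wpt N r x -> 0 < wpt N r y -> x = y.
Proof.
rewrite /shared -ltnNge ltnS => /card_le1_eqP post1 Hx Hy.
by apply: post1; rewrite inE.
Qed.

Lemma marking_eq_ext A B D D' :
  marking_eq N A D B -> D =1 D' -> marking_eq N A D' B.
Proof. by move=> HM E p; rewrite HM; under eq_bigr do rewrite E. Qed.

Lemma marking_eq_place A D B r :
  marking_eq N A D B ->
  B r + \sum_t wpt N r t * D t = A r + \sum_t wtp N t r * D t.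
Proof.
move=> /(_ r); rewrite /incidence (eq_bigr (fun t =>
  Posz (wtp N t r * D t) - Posz (wpt N r t * D t)))%R; last first.
  by move=> t _; rewrite mulrBl -!PoszM.
by rewrite sumrB -!(big_morph Posz PoszD (erefl (Posz 0))); lia.
Qed.

Lemma marking_eq0 A B D : D =1 (fun=> 0) -> marking_eq N A D B -> A = B.
Proof.
move=> D0 HM; apply/ffunP => p; apply/eqP; rewrite -eqz_nat HM.
by rewrite big1 ?addr0 // => t _; rewrite D0 mulr0.
Qed.

Lemma sum_incidence_delta p D t :
  (\sum_u incidence N p u * Posz (D u + (u == t))
   = \sum_u incidence N p u * Posz (D u) + incidence N p t)%R.
Proof.
under eq_bigr do rewrite PoszD mulrDr.
rewrite big_split /=; congr (_ + _)%R.
by rewrite (bigD1 t) //= eqxx mulr1 big1 ?addr0 // => u /negbTE->; rewrite mulr0.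
Qed.

Lemma marking_eq_fire A B D t :
  enabled N A t -> enabled N B t -> marking_eq N A D B ->
  marking_eq N (fire N A t) D (fire N B t).
Proof. by move=> EA EB HM p; rewrite !fire_incidence // HM; lia. Qed.

Lemma marking_eq_fire_debt A B D d :
  enabled N A d -> 0 < D d -> marking_eq N A D B ->
  marking_eq N (fire N A d) (decr D d) B.
Proof.
move=> En Dd HM p; rewrite fire_incidence // HM -addrA; congr (_ + _)%R.
by rewrite addrC -sum_incidence_delta; apply: eq_bigr => t _; rewrite decrK.
Qed.

Lemma marking_eq_fires A B C D s :
  marking_eq N A D B -> fires N B s C ->
  marking_eq N A (fun u => D u + parikh s u) C.
Proof.
elim: s D B => [|t s IH] D B HM /=.
  by move=> <-; apply: marking_eq_ext HM _ => u; rewrite addn0.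
case=> En /IH {}IH.
have HMt : marking_eq N A (fun u => D u + (u == t)) (fire N B t).
  by move=> p; rewrite fire_incidence // HM sum_incidence_delta /incidence; lia.
by apply: marking_eq_ext (IH _ HMt) _ => u; rewrite eq_sym addnA.
Qed.

Definition debt_blocked D X : Prop :=
  forall u, 0 < D u -> exists2 r, X r < wpt N r u &
    forall t, 0 < wtp N t r + wpt N r t -> 0 < D t.

Lemma debt_blocked_fire D X t :
  debt_blocked D X -> enabled N X t -> debt_blocked D (fire N X t).
Proof.
move=> Hbl En u Du; have [r Xr adj] := Hbl u Du; exists r => //.
have Dt : D t = 0.
  apply/eqP; rewrite -leqn0 leqNgt; apply/negP => /Hbl[r' Xr' _].
  by move/forallP: En => /(_ r'); rewrite leqNgt Xr'.
have : ~~ (0 < wtp N t r + wpt N r t) by apply/negP => /adj; rewrite Dt.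
by rewrite /fire ffunE; lia.
Qed.

Lemma debt_blocked_fires D X Y s :
  debt_blocked D X -> fires N X s Y -> debt_blocked D Y.
Proof.
elim: s X => [|t s IH] X /=; first by move=> ? <-.
by move=> Hbl [En Hs]; apply: IH Hs; apply: debt_blocked_fire.
Qed.

Lemma live_debt_blocked D A u : live N A -> debt_blocked D A -> D u = 0.
Proof.
move=> HL Hbl; apply/eqP; rewrite -leqn0 leqNgt; apply/negP => Du.
have [M [[s Hs] En]] := HL u A (ex_intro _ [::] erefl).
have [r Mr _] := debt_blocked_fires Hbl Hs Du.
by move/forallP: En => /(_ r); rewrite leqNgt Mr.
Qed.

End Firing.

Section H1S_WMG.
Variables (P T : finType) (N : net P T).
Hypothesis HN : H1S_WMGle N.
Implicit Types (A B X : marking P) (s : seq T) (D : T -> nat).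

Lemma unshared_pre_uniq r x y :
  ~~ shared N r -> 0 < wtp N x r -> 0 < wtp N y r -> x = y.
Proof.
case: HN => _ WMG /WMG[/card_le1_eqP pre1 _] Hx Hy.
by apply: pre1; rewrite inE.
Qed.

(* In a WMG_<= place with a single input t and a single output u, a debt
   on u without a debt on t would drive B below zero. *)
Lemma unshared_blocking_place A B D u r :
  marking_eq N A D B -> 0 < D u -> A r < wpt N r u -> ~~ shared N r ->
  forall t, 0 < wtp N t r + wpt N r t -> 0 < D t.
Proof.
move=> HM Du Ar unsh t; rewrite addn_gt0 => /orP[tr|]; last first.
  by move/(unshared_post_uniq unsh (leq_ltn_trans (leq0n _) Ar))<-.
rewrite lt0n; apply/negP => /eqP Dt.
have no_input : \sum_v wtp N v r * D v = 0.
  apply/eqP; rewrite sum_nat_eq0; apply/forallP => v; apply/implyP => _.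
  have [->//|/(unshared_pre_uniq unsh)/(_ tr)->] := posnP (wtp N v r).
  by rewrite Dt muln0.
have output_u : wpt N r u <= \sum_v wpt N r v * D v.
  by rewrite (bigD1 u) //= (leq_trans (leq_pmulr _ Du)) ?leq_addr.
by have := marking_eq_place r HM; rewrite no_input; lia.
Qed.

Lemma live_debt_enabled A B D u :
  live N A -> marking_eq N A D B -> 0 < D u ->
  (forall v r, 0 < D v -> shared N r -> 0 < wpt N r v -> wpt N r v <= A r) ->
  exists2 v, 0 < D v & enabled N A v.
Proof.
move=> HL HM Du shared_ok.
case: (pickP (fun v => (0 < D v) && enabled N A v)) => [v /andP[]|none].
  by exists v.
suff Hbl : debt_blocked N D A by move: Du; rewrite (live_debt_blocked u HL Hbl).
move=> v Dv; have /forallPn[r] : ~~ enabled N A v.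
  by apply/negP => Ev; move: (none v); rewrite Dv Ev.
rewrite -ltnNge => Ar; exists r => //.
have unsh : ~~ shared N r.
  apply/negP => /(shared_ok v r Dv)/(_ (leq_ltn_trans (leq0n _) Ar)).
  by rewrite leqNgt Ar.
exact: unshared_blocking_place HM Dv Ar unsh.
Qed.

(* Here homogeneity and the uniqueness of the shared place enter: a shared
   input place of t holds enough tokens for every debt transition. *)
Lemma enabled_debt_free A B D t :
  live N A -> marking_eq N A D B -> enabled N A t -> D t = 0 ->
  (forall v, 0 < D v -> ~~ enabled N A v) -> enabled N B t.
Proof.
move=> HL HM En Dt none; apply/forallP => r; have Ar := forallP En r.
have [no_debt_out|] := boolP [forall v, (0 < wpt N r v) ==> (D v == 0)].
  have : \sum_v wpt N r v * D v = 0.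
    apply/eqP; rewrite sum_nat_eq0; apply/forallP => v; apply/implyP => _.
    have [->//|/(implyP (forallP no_debt_out v))/eqP->] := posnP (wpt N r v).
    by rewrite muln0.
  by have := marking_eq_place r HM; lia.
have [->//|rt] := posnP (wpt N r t).
rewrite negb_forall => /existsP[v]; rewrite negb_imply -lt0n => /andP[rv Dv].
have sh : shared N r.
  by apply: contraT => /unshared_post_uniq/(_ rv rt) vt; move: Dv; rewrite vt Dt.
have [w Dw Ew] : exists2 w, 0 < D w & enabled N A w.
  apply: live_debt_enabled HL HM Dv _ => w r' _ /(HN.1.2 _ _ sh) <- rw.
  by rewrite (HN.1.1 r w t) // /postset_p inE.
by move: (none w Dw); rewrite Ew.
Qed.

Lemma walk_to_debt D rho : forall A B X u,
  live N A -> marking_eq N A D B -> fires N A rho X -> enabled N X u -> 0 < D u ->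
  exists rho' A' B' d, [/\ all (fun t => D t == 0) rho', fires N A rho' A',
    fires N B rho' B', marking_eq N A' D B' & enabled N A' d /\ 0 < D d].
Proof.
elim: rho => [|t rho IH] A B X u HL HM /=.
  by move=> <- En Du; exists [::], A, B, u.
case=> Et Hs En Du.
case: (pickP (fun d => (0 < D d) && enabled N A d)) => [d /andP[Dd Ed]|none].
  by exists [::], A, B, d.
have no_debt_enabled v : 0 < D v -> ~~ enabled N A v.
  by move=> Dv; apply/negP => Ev; move: (none v); rewrite Dv Ev.
have Dt : D t = 0.
  by apply/eqP; apply: contraTT Et; rewrite -lt0n; apply: no_debt_enabled.
have Bt := enabled_debt_free HL HM Et Dt no_debt_enabled.
have HLt : live N (fire N A t) := live_fires (s := [:: t]) HL (conj Et erefl).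
have [rho' [A' [B' [d [rho'0 HA HB HM' Ed]]]]] :=
  IH _ _ _ _ HLt (marking_eq_fire Et Bt HM) Hs En Du.
by exists (t :: rho'), A', B', d; rewrite /= Dt.
Qed.

Lemma fires_residue A B D :
  live N A -> marking_eq N A D B ->
  exists A' s, [/\ fires N A s A', forall t, D t <= parikh s t
                 & fires N B (residue s D) A'].
Proof.
have [n] := ubnP (\sum_t D t); elim: n A B D => // n IH A B D sumD HL HM.
case: (pickP (fun u => 0 < D u)) => [u Du|D0]; last first.
  have D0' : D =1 (fun=> 0) by move=> t; apply/eqP; rewrite -leqn0 leqNgt D0.
  exists A, [::]; split=> // [t|]; first by rewrite D0'.
  by rewrite (marking_eq0 D0' HM).
have [M [[s0 Hs0] En]] := HL u A (ex_intro _ [::] erefl).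
have [rho [A' [B' [d [rho0 HA HB HM' [Ed Dd]]]]]] := walk_to_debt HL HM Hs0 En Du.
have HLd : live N (fire N A' d) :=
  live_fires (s := [:: d]) (live_fires HL HA) (conj Ed erefl).
have sum_lt : \sum_t decr D d t < n by move: sumD; rewrite (sum_decr Dd).
have [A'' [s [Hs Dle Hres]]] :=
  IH _ _ _ sum_lt HLd (marking_eq_fire_debt Ed Dd HM').
exists A'', (rho ++ d :: s); split.
- by apply: fires_cat HA _.
- move=> t; rewrite -(decrK t Dd) /parikh count_cat /= eq_sym.
  rewrite addnC addnCA leq_add2l; exact: leq_trans (Dle t) (leq_addl _ _).
- by rewrite (residue_debt_free (d :: s) rho0) /= Dd; apply: fires_cat HB Hres.
Qed.

Lemma marking_eq_common_reach M0 Y M :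
  live N M0 -> marking_eq N M0 Y M ->
  exists M', reachable N M0 M' /\ reachable N M M'.
Proof.
move=> HL HM; have [M' [s [Hs _ Hres]]] := fires_residue HL HM.
by exists M'; split; [exists s | exists (residue s Y)].
Qed.

Lemma marking_eq_live M0 Y M : live N M0 -> marking_eq N M0 Y M -> live N M.
Proof.
move=> HL HM t M1 [s Hs].
have [M' [[s' Hs'] [s'' Hs'']]] :=
  marking_eq_common_reach HL (marking_eq_fires HM Hs).
have [M'' [[s2 Hs2] En]] := live_fires HL Hs' t (ex_intro _ [::] erefl).
by exists M''; split=> //; exists (s'' ++ s2); apply: fires_cat Hs'' Hs2.
Qed.

End H1S_WMG.

Theorem mainTheorem5 (P T : finType) (N : net P T) (M0 : marking P) :
  H1S_WMGle N -> live N M0 ->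
  (forall (Y : T -> nat) (M : marking P), marking_eq N M0 Y M ->
     exists (M' : marking P) (s : seq T),
       fires N M0 s M' /\ (forall t, Y t <= parikh s t) /\
       fires N M (residue s Y) M')
  /\ initially_directed N M0
  /\ (forall (Y : T -> nat) (M : marking P), marking_eq N M0 Y M -> live N M)
  /\ strongly_live N M0.
Proof.
move=> HN HL; split; last split; last split.
- by move=> Y M HM; have [M' [s [? ? ?]]] := fires_residue HN HL HM; exists M', s.
- by move=> M1 [Y HM]; exact: (marking_eq_common_reach HN HL HM).
- by move=> Y M; exact: marking_eq_live.
- by move=> M [Y HM]; exact: (marking_eq_live HN HL HM).
Qed.
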